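(* Let $q$ be a query, let $\pi_q$ be a finite ranked list of documents, and for each $d\in\pi_q$ let $\lambda(d|\pi_q)\in\mathbb{R}$ be a fixed weight, $r(d)\in\{0,1\}$ a fixed relevance judgment, and $k(d)$ the position of $d$ in the logged ranked list for $q$. Let $U$ be a finite set of users with a probability distribution $P(\cdot|q)$ on $U$, and for $u\in U$ write $p(d,u)=P(e(d)=1|k(d),u)$. Let $N_q$ be a finite nonempty collection of logged sessions for $q$, each session being a pair $(\vec c,u)$ with a fixed user $u\in U$; within each session the examinations $e(d)$, $d\in\pi_q$, are Bernoulli with $P(e(d)=1)=p(d,u)$, all examinations across documents and sessions are mutually independent, and clicks are $c(d)=e(d)\,r(d)$. Assume $p(d,u)>0$ for every $d$ with $r(d)=1$ and every user $u$ appearing in $N_q$. Define $$\hat{l}_{straight}(S|q,N_q)=\frac{1}{|N_q|}\sum_{(\vec c,u)\in N_q}\sum_{d\in\pi_q}\frac{\lambda(d|\pi_q)\,c(d)}{p(d,u)},\qquad \hat{l}_{user\text{-}aware}(S|q,N_q)=\frac{1}{|N_q|}\sum_{(\vec c,u)\in N_q}\sum_{d\in\pi_q}\frac{\lambda(d|\pi_q)\,c(d)}{\sum_{u'\in U}p(d,u')P(u'|q)}$$ (a summand with $c(d)=0$ being taken as $0$). Suppose that for all $d\in\pi_q$, $$\sum_{u\in U}p(d,u)P(u|q)\;\ge\;\frac{1}{|N_q|}\sum_{(\vec c,u)\in N_q}p(d,u).$$ Then $\mathbb{V}\big[\hat{l}_{user\text{-}aware}(S|q,N_q)\big]\le\mathbb{V}\big[\hat{l}_{straight}(S|q,N_q)\big]$,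 where the variances are over the examinations with the users of the sessions fixed.
   Context: Setting: unbiased learning to rank with a per-user position-based examination model and the examination hypothesis (a document is clicked iff it is examined and relevant). $S$ denotes the ranking model producing $\pi_q$; it enters only through the fixed weights $\lambda(d|\pi_q)$. The ''straightforward'' estimator uses each session's own user's examination probability as propensity; the ''user-aware'' estimator uses the $P(\cdot|q)$-weighted average examination probability. *)

From mathcomp Require Import all_boot all_order all_algebra.
Set Implicit Arguments. Unset Strict Implicit. Unset Printing Implicit Defensive.
Import Order.TTheory GRing.Theory Num.Theory.
Local Open Scope ring_scope.

Section ULTR.
Variables (R : realFieldType) (D U : finType) (n : nat).

(* Examination outcomes for all (session, document) pairs. *)
Definition outcome := {ffun 'I_n * D -> bool}.

Definition outcome_prob (p : D -> U -> R) (sess : 'I_n -> U) (e : outcome) : R :=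
  \prod_(x : 'I_n * D)
     (if e x then p x.2 (sess x.1) else 1 - p x.2 (sess x.1)).

Definition Expect (p : D -> U -> R) (sess : 'I_n -> U) (f : outcome -> R) : R :=
  \sum_(e : outcome) outcome_prob p sess e * f e.

Definition Var (p : D -> U -> R) (sess : 'I_n -> U) (f : outcome -> R) : R :=
  Expect p sess (fun e => (f e - Expect p sess f) ^+ 2).

Definition click (r : D -> bool) (e : outcome) (i : 'I_n) (d : D) : R :=
  (e (i, d) && r d)%:R.

(* Straightforward IPS estimator. (Division by 0 gives 0 in MathComp, consistent
   with the convention that summands with c(d) = 0 are 0.) *)
Definition l_straight (lam : D -> R) (r : D -> bool) (p : D -> U -> R)
  (sess : 'I_n -> U) (e : outcome) : R :=
  n%:R^-1 * \sum_(i < n) \sum_(d : D) lam d * click r e i d / p d (sess i).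

Definition avg_exam (p : D -> U -> R) (Pu : U -> R) (d : D) : R :=
  \sum_(u : U) p d u * Pu u.

Definition l_user_aware (lam : D -> R) (r : D -> bool) (p : D -> U -> R)
  (Pu : U -> R) (e : outcome) : R :=
  n%:R^-1 * \sum_(i < n) \sum_(d : D) lam d * click r e i d / avg_exam p Pu d.

End ULTR.

(** Both estimators are linear in the independent Bernoulli examinations, so
    their variances are sums over sessions and documents of
    [(lam d / n)^2 q (1 - q) / w^2], where [q] is the examination probability
    and [w] the propensity used. For a relevant document with per-session
    probabilities [q_i] of mean [m <= a], it remains to show
    [sum_i q_i (1 - q_i) / a^2 <= sum_i (1 - q_i) / q_i]. Since [a >= m] we may
    replace [a] by [m]; then [f q := (1 - q) / q - q (1 - q) / m^2] vanishes at
    [m] and lies above its tangent there, and the tangent terms sum to zero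
    because [m] is the mean of the [q_i]. *)

From mathcomp Require Import all_boot all_order all_algebra.
From mathcomp Require Import ring lra.
Set Implicit Arguments. Unset Strict Implicit. Unset Printing Implicit Defensive.
Import Order.TTheory GRing.Theory Num.Theory.
Local Open Scope ring_scope.

Section IndependentBernoulli.
Variables (R : realFieldType) (X : finType) (q : X -> R).

Definition bprob (e : {ffun X -> bool}) : R :=
  \prod_x (if e x then q x else 1 - q x).

Definition bexpect (f : {ffun X -> bool} -> R) : R := \sum_e bprob e * f e.

Definition bvar (f : {ffun X -> bool} -> R) : R :=
  bexpect (fun e => (f e - bexpect f) ^+ 2).

Lemma eq_bexpect f g : f =1 g -> bexpect f = bexpect g.
Proof. by move=> fg; apply: eq_bigr => e _; rewrite fg. Qed.

Lemma eq_bvar f g : f =1 g -> bvar f = bvar g.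
Proof.
by move=> fg; rewrite /bvar (eq_bexpect fg); apply: eq_bexpect => e; rewrite fg.
Qed.

Lemma bexpect_lin (I : finType) (c : I -> R) (h : I -> {ffun X -> bool} -> R) :
  bexpect (fun e => \sum_i c i * h i e) = \sum_i c i * bexpect (h i).
Proof.
rewrite /bexpect; under eq_bigr do rewrite mulr_sumr.
rewrite exchange_big; apply: eq_bigr => i _.
by rewrite mulr_sumr; apply: eq_bigr => e _; rewrite mulrCA.
Qed.

Lemma bexpect_prod (g : X -> bool -> R) :
  bexpect (fun e => \prod_x g x (e x)) =
  \prod_x (q x * g x true + (1 - q x) * g x false).
Proof.
rewrite /bexpect /bprob.
transitivity (\sum_(e : {ffun X -> bool})
    \prod_x ((if e x then q x else 1 - q x) * g x (e x))).
  by apply: eq_bigr => e _; rewrite big_split.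
transitivity (\prod_x \sum_(b : bool) (if b then q x else 1 - q x) * g x b).
  by rewrite bigA_distr_bigA.
by apply: eq_bigr => x _; rewrite big_bool addrC.
Qed.

Lemma bexpect_coord x (g : bool -> R) :
  bexpect (fun e => g (e x)) = q x * g true + (1 - q x) * g false.
Proof.
rewrite (eq_bexpect (g := fun e => \prod_z (if z == x then g (e z) else 1))); last first.
  by move=> e; rewrite -big_mkcond big_pred1_eq.
rewrite (bexpect_prod (fun z b => if z == x then g b else 1)) (bigD1 x) //= eqxx.
rewrite big1 ?mulr1 // => z /negbTE -> /=.
by rewrite !mulr1 subrKC.
Qed.

Lemma bexpect_coord2 x y (g h : bool -> R) : x != y ->
  bexpect (fun e => g (e x) * h (e y)) =
  bexpect (fun e => g (e x)) * bexpect (fun e => h (e y)).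
Proof.
move=> nxy; pose F z b := (if z == x then g b else 1) * (if z == y then h b else 1).
rewrite (eq_bexpect (g := fun e => \prod_z F z (e z))); last first.
  by move=> e; rewrite big_split /= -!big_mkcond !big_pred1_eq.
rewrite (bexpect_prod F) (bexpect_coord x g) (bexpect_coord y h).
rewrite (bigD1 x) // (bigD1 y) 1?eq_sym //= big1.
  by rewrite /F eqxx (negbTE nxy) eq_sym (negbTE nxy) eqxx /=; ring.
by move=> z /andP[/negbTE zx /negbTE zy]; rewrite /F zx zy /=; ring.
Qed.

Lemma bvar_lin (c : X -> R) :
  bvar (fun e => \sum_x c x * (e x)%:R) = \sum_x c x ^+ 2 * (q x * (1 - q x)).
Proof.
pose Y x (e : {ffun X -> bool}) := (e x)%:R - q x.
have cov x y : bexpect (fun e => Y x e * Y y e) =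
    if x == y then q x * (1 - q x) else 0.
  case: eqVneq => [<-|nxy].
    by rewrite (bexpect_coord x (fun b => (b%:R - q x) * (b%:R - q x))) /=; ring.
  rewrite (bexpect_coord2 (fun b => b%:R - q x) (fun b => b%:R - q y)) //.
  rewrite (bexpect_coord x (fun b => b%:R - q x)).
  by rewrite (bexpect_coord y (fun b => b%:R - q y)) /=; ring.
have mean : bexpect (fun e => \sum_x c x * (e x)%:R) = \sum_x c x * q x.
  rewrite bexpect_lin; apply: eq_bigr => x _.
  by rewrite (bexpect_coord x (fun b => b%:R)) /=; ring.
rewrite /bvar mean.
transitivity (bexpect (fun e => \sum_x c x * \sum_y c y * (Y x e * Y y e))).
  apply: eq_bexpect => e; rewrite -sumrB expr2 mulr_suml.
  apply: eq_bigr => x _; rewrite !mulr_sumr; apply: eq_bigr => y _.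
  by rewrite /Y; ring.
rewrite bexpect_lin; apply: eq_bigr => x _; rewrite bexpect_lin.
under eq_bigr do rewrite cov.
rewrite (bigD1 x) //= eqxx big1 ?addr0; first by ring.
by move=> y /negbTE; rewrite eq_sym => ->; rewrite mulr0.
Qed.

End IndependentBernoulli.

Lemma var_div_sq_le_tangent (R : realFieldType) (x m : R) : 0 < x -> 0 < m ->
  x * (1 - x) / m ^+ 2 <= (1 - x) / x - (2 * m - 2) / m ^+ 2 * (x - m).
Proof.
move=> x_gt0 m_gt0.
have gap : (1 - x) / x - (2 * m - 2) / m ^+ 2 * (x - m) - x * (1 - x) / m ^+ 2
           = (x - m) ^+ 2 * (x + 1) / (x * m ^+ 2).
  by field; rewrite !gt_eqF.
rewrite -subr_ge0 gap; apply: divr_ge0; apply: mulr_ge0; rewrite ?sqr_ge0 //; lra.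
Qed.

Lemma pooled_var_le (R : realFieldType) (I : finType) (x : I -> R) (a : R) :
  (forall i, 0 < x i <= 1) -> #|I|%:R^-1 * \sum_i x i <= a ->
  \sum_i x i * (1 - x i) / a ^+ 2 <= \sum_i x i * (1 - x i) / x i ^+ 2.
Proof.
move=> x01 mean_le; have [I0|card_gt0] := posnP #|I|.
  by rewrite !big_pred0 // => i; have := card0_eq I0 i.
have /card_gt0P[i0 _] := card_gt0.
set m := #|I|%:R^-1 * \sum_i x i.
have m_gt0 : 0 < m.
  rewrite mulr_gt0 ?invr_gt0 ?ltr0n // (bigD1 i0) //=.
  have := x01 i0; have : 0 <= \sum_(i | i != i0) x i.
    by apply: sumr_ge0 => i _; have /andP[/ltW] := x01 i.
  lra.
pose t := (2 * m - 2) / m ^+ 2.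
have tangent_sum : \sum_i t * (x i - m) = 0.
  rewrite -mulr_sumr sumrB sumr_const -[m *+ _]mulr_natl /m mulrA mulfV.
    by rewrite mul1r subrr mulr0.
  by rewrite pnatr_eq0 -lt0n.
apply: (@le_trans _ _ (\sum_i ((1 - x i) / x i - t * (x i - m)))).
  apply: ler_sum => i _; have /andP[x_gt0 x_le1] := x01 i.
  apply: le_trans (var_div_sq_le_tangent x_gt0 m_gt0).
  have a_gt0 : 0 < a := lt_le_trans m_gt0 mean_le.
  apply: ler_wpM2l; first by rewrite mulr_ge0 ?subr_ge0 // ltW.
  by rewrite lef_pV2 ?posrE ?exprn_gt0 // lerXn2r // nnegrE ltW.
have ips i : (1 - x i) / x i = x i * (1 - x i) / x i ^+ 2.
  by have /andP[x_gt0 _] := x01 i; field; rewrite gt_eqF.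
by rewrite sumrB tangent_sum subr0 (eq_bigr _ (fun i _ => ips i)).
Qed.

Lemma Var_bvar (R : realFieldType) (D U : finType) (n : nat) (p : D -> U -> R)
  (sess : 'I_n -> U) (f : outcome D n -> R) :
  Var p sess f = bvar (fun x => p x.2 (sess x.1)) f.
Proof. by []. Qed.

Lemma bvar_ips (R : realFieldType) (D : finType) (n : nat) (lam : D -> R)
  (r : D -> bool) (q w : 'I_n * D -> R) :
  bvar q (fun e => n%:R^-1 * \sum_(i < n) \sum_d lam d * click R r e i d / w (i, d)) =
  \sum_d (r d)%:R * (n%:R^-1 * lam d) ^+ 2 *
     \sum_(i < n) q (i, d) * (1 - q (i, d)) / w (i, d) ^+ 2.
Proof.
pose c x := n%:R^-1 * (lam x.2 * (r x.2)%:R / w x).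
rewrite (@eq_bvar _ _ _ _ (fun e => \sum_x c x * (e x)%:R)); last first.
  move=> e; rewrite pair_bigA mulr_sumr; apply: eq_bigr => -[i d] _ /=.
  by rewrite /c /click; case: (e (i, d)); case: (r d) => /=; ring.
under [RHS]eq_bigr do rewrite mulr_sumr.
rewrite bvar_lin [RHS]exchange_big pair_bigA; apply: eq_bigr => -[i d] _.
by rewrite /c /= -exprVn; case: (r d) => /=; ring.
Qed.

Theorem theorem3p3 (R : realFieldType) (D U : finType) (n : nat)
  (lam : D -> R) (r : D -> bool) (p : D -> U -> R) (Pu : U -> R)
  (sess : 'I_n -> U) :
  (0 < n)%N ->
  (forall d u, 0 <= p d u <= 1) ->
  (forall u, 0 <= Pu u) -> \sum_(u : U) Pu u = 1 ->
  (forall d i, r d -> 0 < p d (sess i)) ->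
  (forall d, n%:R^-1 * \sum_(i < n) p d (sess i) <= avg_exam p Pu d) ->
  Var p sess (l_user_aware (n:=n) lam r p Pu) <= Var p sess (l_straight lam r p sess).
Proof.
move=> _ p01 _ _ p_pos mean_le.
rewrite !Var_bvar /l_user_aware /l_straight.
rewrite (bvar_ips _ _ _ (fun x => avg_exam p Pu x.2)).
rewrite (bvar_ips _ _ _ (fun x => p x.2 (sess x.1))).
apply: ler_sum => d _; case rd: (r d); last by rewrite !mul0r.
rewrite !mul1r /=; apply: ler_wpM2l; first exact: sqr_ge0.
apply: pooled_var_le => [i|]; last by rewrite card_ord.
by rewrite p_pos //=; have /andP[] := p01 d (sess i).
Qed.
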